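(* Let $T$ be a tree on vertex set $\{1,\dots,n\}$, $n\ge2$, let $k\ge2$, and let $M$ be the order-$k$ Steiner distance hypermatrix of $T$. Let $Z$ be the zeta matrix of $T$ rooted at vertex $n$. Then for all $\mathbf{c}_1,\ldots,\mathbf{c}_k\in\mathbb{R}^n$: if $k$ is even, $$M(\mathbf{c}_1,\ldots,\mathbf{c}_k)=\big(U-2(\mathbb{I}^k_{n-1}\oplus[0])\big)(Z\mathbf{c}_1,\ldots,Z\mathbf{c}_k);$$ if $k$ is odd, $$M(\mathbf{c}_1,\ldots,\mathbf{c}_k)=U(Z\mathbf{c}_1,\ldots,Z\mathbf{c}_k).$$
   Context: For $U'\subseteq V(T)$, the Steiner distance $S(U')$ is the minimum number of edges of a connected subgraph of $T$ whose vertex set contains $U'$. The order-$k$ Steiner distance hypermatrix $M$ has entries $M_{(i_1,\dots,i_k)}=S(\{i_1,\dots,i_k\})$, and for any order-$k$, dimension-$n$ hypermatrix $H$, $H(\mathbf{x}_1,\dots,\mathbf{x}_k)=\sum_{\mathbf{i}\in[n]^k}H_{\mathbf{i}}\prod_{j=1}^k x_{j i_j}$. The zeta matrix $Z$ of $T$ rooted at $n$ is the $n\times n$ matrix with $Z_{xy}=1$ if $x$ lies on the unique path in $T$ from $y$ to $n$ (including the endpoints), and $Z_{xy}=0$ otherwise. $U$ is the order-$k$, dimension-$n$ hypermatrix whose $(i_1,\dots,i_k)$ entry equals $(-1)^{t-1}$ if there exist a vertex $w\in\{1,\dots,n-1\}$ and a set $S\subseteq\{1,\dots,k\}$ with $|S|=t$,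 $1\le t\le k-1$, such that $i_j=w$ for $j\in S$ and $i_j=n$ for $j\notin S$; and $0$ otherwise. $\mathbb{I}^k_{n-1}\oplus[0]$ is the order-$k$, dimension-$n$ hypermatrix whose $(i_1,\dots,i_k)$ entry is $1$ if $i_1=\dots=i_k\in\{1,\dots,n-1\}$ and $0$ otherwise. *)

From HB Require Import structures.
From mathcomp Require Import all_boot all_order all_algebra.
Set Implicit Arguments. Unset Strict Implicit. Unset Printing Implicit Defensive.
Import Order.TTheory GRing.Theory Num.Theory.
Local Open Scope ring_scope.

Definition edges (N : nat) (e : rel 'I_N) : {set {set 'I_N}} :=
  [set [set p.1; p.2] | p in [set p : 'I_N * 'I_N | e p.1 p.2]].

Definition is_tree (N : nat) (e : rel 'I_N) : Prop :=
  symmetric e /\ irreflexive e /\ (forall x y, connect e x y) /\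
  #|edges e| = N.-1.

Definition steiner_ok (N : nat) (e : rel 'I_N) (A : {set 'I_N})
    (p : {set 'I_N} * {set {set 'I_N}}) : bool :=
  [&& A \subset p.1, p.2 \subset edges e,
      [forall f in p.2, f \subset p.1] &
      [forall x in p.1, forall y in p.1,
         connect (fun a b => [set a; b] \in p.2) x y]].

(* Steiner distance: minimum number of edges of such a subgraph
   (the default N is never attained for a tree, which has N-1 edges). *)
Definition steiner (N : nat) (e : rel 'I_N) (A : {set 'I_N}) : nat :=
  \big[minn/N]_(p | steiner_ok e A p) #|p.2|.

Definition hypermatrix (R : Type) (k N : nat) := {ffun 'I_k -> 'I_N} -> R.

Definition hform (R : comNzRingType) (k N : nat) (H : hypermatrix R k N)
    (x : 'I_k -> 'cV[R]_N) : R :=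
  \sum_(i : {ffun 'I_k -> 'I_N}) H i * \prod_(j < k) x j (i j) 0.

Definition steiner_hm (R : comNzRingType) (k N : nat) (e : rel 'I_N)
  : hypermatrix R k N :=
  fun i => (steiner e [set i j | j : 'I_k])%:R.

Definition on_path (N : nat) (e : rel 'I_N) (x y r : 'I_N) : bool :=
  [exists m : 'I_N, exists t : m.-tuple 'I_N,
     [&& path e y t, last y t == r, uniq (y :: t) & x \in y :: t]].

Definition zeta (R : comNzRingType) (N : nat) (e : rel 'I_N) (r : 'I_N)
  : 'M[R]_N :=
  \matrix_(x, y) (on_path e x y r)%:R.

Definition U_cond (k N : nat) (r : 'I_N) (i : {ffun 'I_k -> 'I_N})
    (p : 'I_N * {set 'I_k}) : bool :=
  [&& p.1 != r, (0 < #|p.2| < k)%N &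
      [forall j, i j == (if j \in p.2 then p.1 else r)]].

Definition U_hm (R : comNzRingType) (k N : nat) (r : 'I_N) : hypermatrix R k N :=
  fun i => if [pick p | U_cond r i p] is Some p
           then (-1) ^+ (#|p.2|.-1) else 0.

(* I^k_{N-1} (+) [0] : diagonal identity except at the root. *)
Definition Idiag_hm (R : comNzRingType) (k N : nat) (r : 'I_N)
  : hypermatrix R k N :=
  fun i => if [exists w, (w != r) && [forall j, i j == w]] then 1 else 0.

Definition hm_sub (R : comNzRingType) (k N : nat) (A B : hypermatrix R k N)
  : hypermatrix R k N := fun i => A i - B i.
Definition hm_scale (R : comNzRingType) (k N : nat) (a : R) (A : hypermatrix R k N)
  : hypermatrix R k N := fun i => a * A i.

Arguments steiner_hm R k {N} e _.
Arguments U_hm R k {N} r _.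
Arguments Idiag_hm R k {N} r _.
Arguments zeta R {N} e r.

From mathcomp Require Import all_boot all_order all_algebra.
From mathcomp Require Import zify ring.
Set Implicit Arguments. Unset Strict Implicit. Unset Printing Implicit Defensive.
Import Order.TTheory GRing.Theory Num.Theory.

(* Root T at r and let parent v be the neighbour of v closer to r; the edges of
   T are exactly the pairs {v, parent v} with v != r.  The smallest subtree
   containing a nonempty set A uses the edge {v, parent v} exactly when the
   subtree below v meets A without containing it, so
     S(A) = \sum_(v != r) (1 - [A below v] - [A disjoint from below v]).
   Since (Z c)_v sums c over the subtree below v and (Z c)_r is the total sum,
   multilinearity gives
     M(c_1,...,c_k) = \sum_(v != r) (prod_j (Zc_j)_r - prod_j (Zc_j)_v
                                      - prod_j ((Zc_j)_r - (Zc_j)_v)),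
   and expanding the last product over the subsets of {1..k} produces the
   entries of U, plus -2 (I (+) [0]) when k is even. *)

Lemma set2_eq_cases (T : finType) (a b c d : T) :
  a != b -> [set a; b] = [set c; d] -> (a = c /\ b = d) \/ (a = d /\ b = c).
Proof.
move=> nab E.
have : a \in [set c; d] by rewrite -E set21.
have : b \in [set c; d] by rewrite -E set22.
rewrite !inE => /orP[]/eqP hb /orP[]/eqP ha; do ?by [left|right].
all: by rewrite ha hb eqxx in nab.
Qed.

Lemma path_exit_edge (T : eqType) (e : rel T) (P : pred T) a s :
  path e a s -> P a -> ~~ P (last a s) -> exists x y, [/\ e x y, P x & ~~ P y].
Proof.
elim: s a => [|b s IH] a /=; first by move=> _ ->.
move=> /andP[eab hp] Pa; case Pb: (P b); first exact: IH.
by move=> _; exists a, b; rewrite Pb.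
Qed.

Section RootedTree.
Variables (N : nat) (e : rel 'I_N) (r : 'I_N).
Hypothesis tree_e : is_tree e.

Definition walk_to_root y m :=
  [exists t : m.-tuple 'I_N, path e y t && (last y t == r)].

Definition depth y := find (walk_to_root y) (iota 0 N).

Lemma short_walk_to_root y : exists2 m, m < N & walk_to_root y m.
Proof.
have [_ [_ [conn _]]] := tree_e.
have /connectP[p hp hr] := conn y r.
case: (shortenP hp) hr => p' hp' hu _ hr.
exists (size p').
  by have := max_card (mem (y :: p')); rewrite card_ord (card_uniqP hu).
by apply/existsP; exists (in_tuple p'); rewrite /= hp' hr eqxx.
Qed.

Lemma has_walk_to_root y : has (walk_to_root y) (iota 0 N).
Proof.
by have [m hm hw] := short_walk_to_root y; apply/hasP; exists m; rewrite ?mem_iota.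
Qed.

Lemma depth_lt y : depth y < N.
Proof. by rewrite -[X in _ < X](size_iota 0 N) -has_find has_walk_to_root. Qed.

Lemma walk_to_root_depth y : walk_to_root y (depth y).
Proof.
have := nth_find 0 (has_walk_to_root y).
by rewrite nth_iota ?depth_lt.
Qed.

Lemma depth_min y m : walk_to_root y m -> depth y <= m.
Proof.
move=> hw; rewrite leqNgt; apply/negP => hm.
have := before_find 0 hm.
by rewrite nth_iota ?add0n ?hw // (ltn_trans hm (depth_lt y)).
Qed.

Lemma depth_root : depth r = 0.
Proof.
apply/eqP; rewrite -leqn0; apply: depth_min.
by apply/existsP; exists [tuple]; rewrite /= eqxx.
Qed.

Lemma depth_eq0 y : depth y = 0 -> y = r.
Proof.
move=> h; have := walk_to_root_depth y; rewrite h.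
by case/existsP => t /andP[_]; rewrite tuple0 => /eqP.
Qed.

Lemma depth_edge y z : e y z -> depth y <= (depth z).+1.
Proof.
move=> eyz; have /existsP[t /andP[hp hl]] := walk_to_root_depth z.
by apply: depth_min; apply/existsP; exists [tuple of z :: t]; rewrite /= eyz hp.
Qed.

Lemma lower_neighbour y : y != r -> exists2 z, e y z & depth z < depth y.
Proof.
move=> yr; have /existsP[[s size_s] /andP[]] := walk_to_root_depth y.
case: s size_s => [|z s] /= size_s; first by move=> _ /eqP hy; rewrite hy eqxx in yr.
case/andP => eyz hp hl; exists z => //.
rewrite -(eqP size_s) ltnS; apply: depth_min.
by apply/existsP; exists (in_tuple s); rewrite hp.
Qed.

Definition parent y :=
  if [pick z | e y z && (depth z < depth y)] is Some z then z else y.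

Lemma parent_root : parent r = r.
Proof. by rewrite /parent; case: pickP => // z /andP[_]; rewrite depth_root. Qed.

Lemma parent_spec y : y != r -> e y (parent y) /\ depth (parent y) < depth y.
Proof.
move=> yr; rewrite /parent; case: pickP => [z /andP[]|no_lower] //.
by have [z ez dz] := lower_neighbour yr; have := no_lower z; rewrite ez dz.
Qed.

Lemma depth_parent y : depth (parent y) = (depth y).-1.
Proof.
have [->|yr] := eqVneq y r; first by rewrite parent_root depth_root.
have [ey dy] := parent_spec yr; have := depth_edge ey.
by case: (depth y) dy => // d; rewrite ltnS => lt ge; apply/eqP; rewrite eqn_leq lt.
Qed.

Lemma depth_iter_parent j y : depth (iter j parent y) = depth y - j.
Proof. by elim: j => [|j IH]; rewrite ?subn0 // iterS depth_parent IH subnS. Qed.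

Lemma iter_parent_root j y : depth y <= j -> iter j parent y = r.
Proof.
by move=> h; apply: depth_eq0; rewrite depth_iter_parent; apply/eqP; rewrite subn_eq0.
Qed.

Lemma parent_edge_inj v w : v != r -> w != r ->
  [set v; parent v] = [set w; parent w] -> v = w.
Proof.
move=> vr wr E; have [_ dv] := parent_spec vr; have [_ dw] := parent_spec wr.
have vp : v != parent v by apply: contraTneq dv => <-; rewrite ltnn.
case: (set2_eq_cases vp E) => [[]//|[h1 h2]].
by move: dv dw; rewrite h2 -h1 => /ltn_trans h /h; rewrite ltnn.
Qed.

(* A tree has N - 1 edges and the N - 1 pairs {v, parent v} are distinct edges,
   so they are all the edges. *)
Lemma edges_parent : edges e = [set [set v; parent v] | v in [set~ r]].
Proof.
have [_ [_ [_ card_edges]]] := tree_e.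
apply/esym/eqP; rewrite eqEcard card_edges card_in_imset ?cardsC1 ?card_ord //; last first.
  by move=> v w; rewrite !inE; apply: parent_edge_inj.
rewrite leqnn andbT; apply/subsetP => _ /imsetP[v /[!inE] vr ->].
by apply/imsetP; exists (v, parent v); rewrite // inE (parent_spec vr).1.
Qed.

Lemma edge_parent a b : e a b ->
  (a != r /\ b = parent a) \/ (b != r /\ a = parent b).
Proof.
move=> eab; have [_ [irr _]] := tree_e.
have ab : a != b by apply: contraTneq eab => ->; rewrite irr.
have : [set a; b] \in edges e by apply/imsetP; exists (a, b); rewrite ?inE.
rewrite edges_parent => /imsetP[u /[!inE] ur E].
by case: (set2_eq_cases ab E) => -[-> ->]; [left | right].
Qed.

Lemma edges_tree_parent x y : [set x; y] \in edges e -> x != y ->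
  exists2 u, u != r & (x = u /\ y = parent u) \/ (x = parent u /\ y = u).
Proof.
rewrite edges_parent => /imsetP[u /[!inE] ur E] xy; exists u => //.
by case: (set2_eq_cases xy E) => -[-> ->]; [left | right].
Qed.

Lemma root_path_traject s y : path e y s -> last y s = r -> uniq (y :: s) ->
  s = traject parent (parent y) (size s).
Proof.
elim: s y => [|z s IH] y //= /andP[eyz hp] hl /andP[ys hu].
have {IH hp}hs := IH z hp hl hu.
case: (edge_parent eyz) => [[_ zy]|[zr yz]]; first by rewrite /= -zy -hs.
case: s hs hl ys {hu} => [|w s] /= hs hl; first by rewrite hl eqxx in zr.
by case: hs => hw _; rewrite !inE hw -yz eqxx !orbT.
Qed.

Lemma path_traject_parent d y : d <= depth y -> path e y (traject parent (parent y) d).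
Proof.
elim: d y => [|d IH] y hd //=.
have yr : y != r by apply: contraTneq hd => ->; rewrite depth_root.
rewrite (parent_spec yr).1 IH // depth_parent -ltnS (ltn_predK hd) //.
Qed.

Lemma uniq_traject_parent d y : d <= depth y -> uniq (traject parent y d.+1).
Proof.
elim: d y => [|d IH] y hd //.
rewrite trajectS cons_uniq IH ?andbT; last by rewrite depth_parent -ltnS (ltn_predK hd).
apply/trajectP => -[i _ hi].
have := depth_iter_parent i (parent y); rewrite -hi depth_parent; lia.
Qed.

Definition ancestor x y := exists j, iter j parent y = x.

Lemma on_pathP x y : reflect (ancestor x y) (on_path e x y r).
Proof.
apply: (iffP existsP) => [[m /existsP[t /and4P[hp hl hu hx]]]|[j hj]].
  move: hx; rewrite (root_path_traject hp (eqP hl) hu) -trajectS.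
  by case/trajectP => i _ ->; exists i.
exists (Ordinal (depth_lt y)); apply/existsP.
exists (Tuple (introT eqP (size_traject parent (parent y) (depth y)))).
apply/and4P; split => /=.
- exact: path_traject_parent.
- by rewrite last_traject iter_parent_root.
- exact: uniq_traject_parent.
change (x \in traject parent y (depth y).+1); apply/trajectP.
have [jd|dj] := leqP j (depth y); first by exists j.
by exists (depth y); rewrite // -hj !iter_parent_root // ltnW.
Qed.

Lemma ancestor_refl x : ancestor x x. Proof. by exists 0. Qed.

Lemma ancestor_root y : ancestor r y.
Proof. by exists (depth y); rewrite iter_parent_root. Qed.

Lemma ancestor_parent y : ancestor (parent y) y. Proof. by exists 1. Qed.

Lemma ancestor_trans x y z : ancestor x y -> ancestor y z -> ancestor x z.
Proof. by move=> [i <-] [j <-]; exists (i + j); rewrite iterD. Qed.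

Lemma ancestor_total x y a : ancestor x a -> ancestor y a -> ancestor x y \/ ancestor y x.
Proof.
move=> [i <-] [j <-]; have [ij|ji] := leqP i j.
  by right; exists (j - i); rewrite -iterD subnK.
by left; exists (i - j); rewrite -iterD subnK // ltnW.
Qed.

Lemma ancestor_antisym x y : ancestor x y -> ancestor y x -> x = y.
Proof.
move=> [[|i] hi] [j hj] //.
have := depth_iter_parent i.+1 y; have := depth_iter_parent j x; rewrite hi hj => dx dy.
have y0 : depth y = 0 by lia.
by rewrite -hi iter_parent_root ?y0 // (depth_eq0 y0).
Qed.

Lemma ancestor_step v u : ancestor v u -> v = u \/ ancestor v (parent u).
Proof. by move=> [[|j] <-]; [left | right; exists j; rewrite iterSr]. Qed.

Definition splits (A : {set 'I_N}) v :=
  [exists a in A, on_path e v a r] && [exists a in A, ~~ on_path e v a r].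

Definition splitting A := [set v | (v != r) && splits A v].
Definition splitting_edges A := [set [set v; parent v] | v in splitting A].
Definition splitting_hull A := A :|: splitting A :|: parent @: splitting A.

Lemma card_splitting_edges A : #|splitting_edges A| = #|splitting A|.
Proof.
apply: card_in_imset => v w; rewrite !inE => /andP[vr _] /andP[wr _].
exact: parent_edge_inj.
Qed.

(* A walk in the subgraph from a vertex of A below v to one not below v
   has to use the edge {v, parent v}. *)
Lemma splitting_edges_sub A p : steiner_ok e A p -> splitting_edges A \subset p.2.
Proof.
case/and4P => AW FE _ conn; apply/subsetP => _ /imsetP[v + ->].
rewrite inE => /and3P[vr /exists_inP[a aA va] /exists_inP[b bA vb]].
have /connectP[s hs hl] :=
  forall_inP (forall_inP conn a (subsetP AW a aA)) b (subsetP AW b bA).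
have vl : ~~ on_path e v (last a s) r by rewrite -hl.
have [x [y [xy vx vy]]] := path_exit_edge (P := fun x => on_path e v x r) hs va vl.
have x_y : x != y by apply: contraNneq vy => <-.
have [u ur [[ex ey]|[ex ey]]] := edges_tree_parent (subsetP FE _ xy) x_y;
  rewrite {}ex {}ey in xy vx vy.
- have [->|vu] := eqVneq v u; first by [].
  case: (ancestor_step (on_pathP _ _ vx)) => [vu'|/on_pathP vpu].
    by rewrite vu' eqxx in vu.
  by rewrite vpu in vy.
- by case/negP: vy; apply/on_pathP/(ancestor_trans (on_pathP _ _ vx))/ancestor_parent.
Qed.

Lemma hull_ancestor A x : x \in splitting_hull A -> exists2 a, a \in A & ancestor x a.
Proof.
rewrite !inE => /orP[/orP[xA|/and3P[_ /exists_inP[a aA /on_pathP xa] _]]|].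
- by exists x => //; apply: ancestor_refl.
- by exists a.
case/imsetP => v /[!inE] /and3P[_ /exists_inP[a aA /on_pathP va] _] ->.
by exists a => //; apply: ancestor_trans (ancestor_parent v) va.
Qed.

Definition hull_top A c := c \in splitting_hull A /\ forall a, a \in A -> ancestor c a.

Lemma connect_hull_top A d x : depth x <= d -> x \in splitting_hull A ->
  exists2 c, hull_top A c & connect (fun x y => [set x; y] \in splitting_edges A) x c.
Proof.
elim: d x => [|d IH] x dx xW.
  exists x => //; split=> // a _.
  by rewrite (depth_eq0 (_ : depth x = 0)); [apply: ancestor_root | apply/eqP; rewrite -leqn0].
have [top|] := boolP [forall a in A, on_path e x a r].
  by exists x => //; split=> // a aA; apply/on_pathP/(forall_inP top).
move=> not_top; have xr : x != r.
  by apply: contraNneq not_top => ->; apply/forall_inP => a _; apply/on_pathP/ancestor_root.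
have xS : x \in splitting A.
  rewrite inE xr /splits -negb_forall_in not_top andbT.
  by have [a aA /on_pathP xa] := hull_ancestor xW; apply/exists_inP; exists a.
have dpx : depth (parent x) <= d by rewrite depth_parent; case: (depth x) dx.
have pxW : parent x \in splitting_hull A.
  by rewrite !inE; apply/orP; right; apply/imsetP; exists x.
have [c top_c pc] := IH _ dpx pxW.
by exists c => //; apply: connect_trans pc; apply: connect1; apply/imsetP; exists x.
Qed.

Lemma hull_top_ancestor A c c' : hull_top A c -> hull_top A c' -> ancestor c' c -> c' = c.
Proof.
move=> [_ top_c] [c'W top_c'] c'c; move: c'W; rewrite !inE => /orP[/orP[c'A|]|].
- exact: ancestor_antisym c'c (top_c _ c'A).
- by case/and3P=> _ _ /exists_inP[a aA /negP[]]; apply/on_pathP/top_c'.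
case/imsetP => v /[!inE] /and3P[_ /exists_inP[a aA /on_pathP va]].
move=> /exists_inP[b bA /negP vb] c'v.
case: (ancestor_total va (top_c a aA)) => [vc|cv].
  by case: vb; apply/on_pathP/(ancestor_trans vc)/top_c.
have [cv'|/negbTE cv'] := eqVneq c v.
  by case: vb; apply/on_pathP; rewrite -cv'; apply: top_c.
case: (ancestor_step cv) => [cv''|cpv]; first by rewrite cv'' eqxx in cv'.
by rewrite c'v; apply: ancestor_antisym cpv; rewrite -c'v.
Qed.

Lemma steiner_ok_hull A : A != set0 ->
  steiner_ok e A (splitting_hull A, splitting_edges A).
Proof.
case/set0Pn => a0 a0A; apply/and4P; split => /=.
- by apply/subsetP => x xA; rewrite !inE xA.
- apply/subsetP => _ /imsetP[v /[!inE] /andP[vr _] ->].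
  by apply/imsetP; exists (v, parent v); rewrite // inE (parent_spec vr).1.
- apply/forall_inP => _ /imsetP[v vS ->]; apply/subsetP => x /set2P[]->.
    by rewrite !in_setU vS orbT.
  by rewrite !inE; apply/orP; right; apply/imsetP; exists v.
apply/forall_inP => x xW; apply/forall_inP => y yW.
have [c top_c xc] := connect_hull_top (leqnn _) xW.
have [c' top_c' yc'] := connect_hull_top (leqnn _) yW.
have c'c : c' = c.
  case: (ancestor_total (top_c.2 a0 a0A) (top_c'.2 a0 a0A)) => h.
    by apply/esym/(hull_top_ancestor top_c').
  exact: hull_top_ancestor top_c' h.
apply: connect_trans xc _; rewrite -c'c (sym_connect_sym _) //.
by move=> u w; rewrite setUC.
Qed.

Lemma steiner_card A : A != set0 -> steiner e A = #|splitting A|.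
Proof.
move=> A0; apply/eqP; rewrite eqn_leq; apply/andP; split.
  rewrite /steiner -card_splitting_edges -minEnat.
  exact: (bigmin_le_cond (P := steiner_ok e A) N (fun p => #|p.2|) (steiner_ok_hull A0)).
apply: (big_ind (leq #|splitting A|)) => [||p /splitting_edges_sub].
- by have := max_card (mem (splitting A)); rewrite card_ord.
- by move=> x y; rewrite leq_min => ->.
by rewrite -card_splitting_edges; apply: subset_leq_card.
Qed.

End RootedTree.

Local Open Scope ring_scope.

Section ProductExpansion.
Variables (R : comNzRingType) (I : finType).

Lemma prod_if_opp (S : {set I}) (a b : I -> R) :
  \prod_j (if j \in S then - a j else b j) =
  (-1) ^+ #|S| * \prod_j (if j \in S then a j else b j).
Proof.
have -> : (-1) ^+ #|S| = \prod_j (if j \in S then -1 else 1) :> R.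
  by rewrite -big_mkcond /= prodr_const.
rewrite -big_split /=.
by apply: eq_bigr => j _; case: (j \in S); rewrite ?mulN1r ?mul1r.
Qed.

(* Expand the product over the 2^|I| choices; the two extreme choices
   S = set0 and S = setT cancel against the first two terms. *)
Lemma prod_sub_expand (a b : I -> R) : (0 < #|I|)%N ->
  \prod_j b j - \prod_j a j - \prod_j (b j - a j) =
  \sum_(S : {set I} | (0 < #|S| < #|I|)%N)
     (-1) ^+ #|S|.-1 * \prod_j (if j \in S then a j else b j)
  - (if ~~ odd #|I| then 2 * \prod_j a j else 0).
Proof.
move=> I_gt0; have T0 : [set: I] != set0 by rewrite -card_gt0 cardsT.
have -> : \prod_j (b j - a j) = \prod_j (- a j + b j).
  by apply: eq_bigr => j _; rewrite addrC.
rewrite bigA_distr /= (bigD1 set0) //= (bigD1 setT) //=.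
have -> : \prod_j (if j \in (set0 : {set I}) then - a j else b j) = \prod_j b j.
  by apply: eq_bigr => j _; rewrite in_set0.
have -> : \prod_j (if j \in [set: I] then - a j else b j) = (-1) ^+ #|I| * \prod_j a j.
  by rewrite prod_if_opp cardsT; congr (_ * _); apply: eq_bigr => j _; rewrite in_setT.
have -> : \sum_(S : {set I} | (S != set0) && (S != setT))
    \prod_j (if j \in S then - a j else b j) =
    - \sum_(S : {set I} | (0 < #|S| < #|I|)%N)
        (-1) ^+ #|S|.-1 * \prod_j (if j \in S then a j else b j).
  rewrite -sumrN; apply: eq_big => [S|S /andP[S0 _]].
    by rewrite card_gt0; congr (_ && _); rewrite eqEcard subsetT cardsT -ltnNge.
  rewrite prod_if_opp -(prednK (_ : 0 < #|S|)%N) ?card_gt0 //.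
  by rewrite exprS mulN1r mulNr.
rewrite -signr_odd; case: (odd #|I|) => /=; rewrite ?expr0 ?expr1; ring.
Qed.

End ProductExpansion.

Section HypermatrixForms.
Variables (R : comNzRingType) (k N : nat) (r : 'I_N).

Lemma hform_sub_scale (A B : hypermatrix R k N) (a : R) x :
  hform (hm_sub A (hm_scale a B)) x = hform A x - a * hform B x.
Proof.
rewrite /hform mulr_sumr -sumrB; apply: eq_bigr => i _.
by rewrite /hm_sub /hm_scale mulrBl mulrA.
Qed.

Definition split_index (w : 'I_N) (S : {set 'I_k}) : {ffun 'I_k -> 'I_N} :=
  [ffun j => if j \in S then w else r].

Lemma U_condE (i : {ffun 'I_k -> 'I_N}) (p : 'I_N * {set 'I_k}) :
  U_cond r i p = [&& p.1 != r, (0 < #|p.2| < k)%N & i == split_index p.1 p.2].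
Proof.
congr [&& _, _ & _]; apply/forallP/eqP => [i_split|->]; last by move=> j; rewrite ffunE.
by apply/ffunP => j; rewrite ffunE; apply/eqP.
Qed.

Lemma U_cond_inj (i : {ffun 'I_k -> 'I_N}) (p q : 'I_N * {set 'I_k}) :
  U_cond r i p -> U_cond r i q -> p = q.
Proof.
case: p q => [w S] [w' S']; rewrite !U_condE /=.
move=> /and3P[wr /andP[S0 _] /eqP->] /and3P[_ _ /eqP/ffunP E].
have /set0Pn[j jS] : S != set0 by rewrite -card_gt0.
have := E j; rewrite !ffunE jS; case: ifP => [_ ww'|_ wr']; last by rewrite wr' eqxx in wr.
subst w'; congr pair; apply/setP => x; have := E x; rewrite !ffunE.
by case: (x \in S); case: (x \in S') => //= wrx; rewrite wrx eqxx in wr.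
Qed.

Lemma U_hm_sum (i : {ffun 'I_k -> 'I_N}) :
  U_hm R k r i = \sum_(p | U_cond r i p) (-1) ^+ #|p.2|.-1.
Proof.
rewrite /U_hm; case: pickP => [p Up|no_p]; last by rewrite big_pred0.
rewrite (big_pred1 p) // => q; apply/idP/eqP => [Uq|->] //; exact: U_cond_inj Uq Up.
Qed.

Lemma hform_U_hm x : hform (U_hm R k r) x =
  \sum_(w | w != r) \sum_(S : {set 'I_k} | (0 < #|S| < k)%N)
     (-1) ^+ #|S|.-1 * \prod_j (if j \in S then x j w 0 else x j r 0).
Proof.
rewrite /hform.
under eq_bigr => i _ do rewrite U_hm_sum mulr_suml big_mkcond.
rewrite exchange_big /= [RHS]pair_big_dep /= [RHS]big_mkcond /=.
apply: eq_bigr => -[w S] _ /=; case: ifP => [split_ok|not_ok]; last first.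
  by rewrite big1 // => i _; rewrite U_condE /= andbA not_ok.
rewrite -big_mkcond /= (big_pred1 (split_index w S)) => [|i].
  by congr (_ * _); apply: eq_bigr => j _; rewrite ffunE; case: (j \in S).
by rewrite U_condE /=; case/andP: split_ok => -> ->.
Qed.

Lemma prod_sum_mask (P : pred 'I_N) (x : 'I_k -> 'cV[R]_N) :
  \prod_j \sum_y (P y)%:R * x j y 0 =
  \sum_(i : {ffun 'I_k -> 'I_N}) [forall j, P (i j)]%:R * \prod_j x j (i j) 0.
Proof.
rewrite bigA_distr_bigA; apply: eq_bigr => i _; rewrite big_split /=; congr (_ * _).
have [/forallP Pi|] := boolP [forall j, P (i j)]; first by rewrite big1 // => j _; rewrite Pi.
by rewrite negb_forall => /existsP[j /negbTE Pij]; rewrite (bigD1 j) //= Pij mul0r.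
Qed.

Hypothesis k_gt0 : (0 < k)%N.

Lemma Idiag_hm_sum (i : {ffun 'I_k -> 'I_N}) :
  Idiag_hm R k r i = \sum_(w | w != r) (i == [ffun => w])%:R.
Proof.
rewrite /Idiag_hm; case: existsP => [[w /andP[wr /forallP iw]]|no_w].
  have -> : i = [ffun => w] by apply/ffunP => j; rewrite ffunE; apply/eqP.
  rewrite (bigD1 w) //= eqxx big1 ?addr0 // => w' /andP[_ w'w].
  case: eqP => // /ffunP/(_ (Ordinal k_gt0)); rewrite !ffunE => ww'.
  by rewrite ww' eqxx in w'w.
rewrite big1 // => w wr; case: eqP => // iw.
by case: no_w; exists w; rewrite wr; apply/forallP => j; rewrite iw ffunE.
Qed.

Lemma hform_Idiag_hm x :
  hform (Idiag_hm R k r) x = \sum_(w | w != r) \prod_j x j w 0.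
Proof.
rewrite /hform; under eq_bigr => i _ do rewrite Idiag_hm_sum mulr_suml.
rewrite exchange_big /=; apply: eq_bigr => w _.
rewrite (bigD1 [ffun => w]) //= eqxx mul1r [X in _ + X]big1 ?addr0.
  by apply: eq_bigr => j _; rewrite ffunE.
by move=> i /negbTE->; rewrite mul0r.
Qed.

Lemma hform_U_Idiag x :
  (if ~~ odd k then hform (hm_sub (U_hm R k r) (hm_scale 2 (Idiag_hm R k r))) x
   else hform (U_hm R k r) x) =
  \sum_(w | w != r) (\prod_j x j r 0 - \prod_j x j w 0 - \prod_j (x j r 0 - x j w 0)).
Proof.
under [RHS]eq_bigr => w _ do rewrite (prod_sub_expand (fun j => x j w 0)) card_ord //.
rewrite sumrB; case: ifP => _; last by rewrite hform_U_hm big1_eq subr0.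
by rewrite hform_sub_scale hform_U_hm hform_Idiag_hm mulr_sumr.
Qed.

End HypermatrixForms.

Section SteinerForm.
Variables (R : comNzRingType) (k N : nat) (e : rel 'I_N) (r : 'I_N).
Hypotheses (tree_e : is_tree e) (k_gt0 : (0 < k)%N).

Lemma zeta_mulmx (x : 'cV[R]_N) v :
  (zeta R e r *m x) v 0 = \sum_y (on_path e v y r)%:R * x y 0.
Proof. by rewrite mxE; apply: eq_bigr => y _; rewrite mxE. Qed.

Lemma zeta_mulmx_root (x : 'cV[R]_N) : (zeta R e r *m x) r 0 = \sum_y x y 0.
Proof.
rewrite zeta_mulmx; apply: eq_bigr => y _.
by rewrite (introT (on_pathP r tree_e _ _) (ancestor_root r tree_e y)) mul1r.
Qed.

Lemma zeta_mulmx_root_sub (x : 'cV[R]_N) v :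
  (zeta R e r *m x) r 0 - (zeta R e r *m x) v 0 =
  \sum_y (~~ on_path e v y r)%:R * x y 0.
Proof.
rewrite zeta_mulmx_root zeta_mulmx -sumrB; apply: eq_bigr => y _.
by case: (on_path e v y r); rewrite ?mul1r ?mul0r ?subr0 ?subrr.
Qed.

Lemma natr_card_splitting (i : {ffun 'I_k -> 'I_N}) :
  (#|splitting e r [set i j | j : 'I_k]|)%:R =
  \sum_(v | v != r) (1 - [forall j, on_path e v (i j) r]%:R
                       - [forall j, ~~ on_path e v (i j) r]%:R) :> R.
Proof.
rewrite -sum1_card (eq_bigl (fun v => (v != r) && splits e r [set i j | j : 'I_k] v));
  last by move=> v; rewrite inE.
rewrite natr_sum big_mkcondr /=; apply: eq_bigr => v _.
have image_exists (p : pred 'I_N) :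
    [exists a in [set i j | j : 'I_k], p a] = [exists j, p (i j)].
  apply/exists_inP/existsP => [[_ /imsetP[j _ ->] pj]|[j pj]]; first by exists j.
  by exists (i j) => //; apply: imset_f.
rewrite /splits !image_exists -[[exists j, on_path _ _ _ _]]negbK !negb_exists.
have [all_j|] := boolP [forall j, on_path e v (i j) r].
  have /negbTE-> : ~~ [forall j, ~~ on_path e v (i j) r].
    rewrite negb_forall; apply/existsP; exists (Ordinal k_gt0).
    by rewrite negbK (forallP all_j).
  by rewrite subr0 subrr.
by move=> _; case: [forall j, ~~ _]; rewrite /= ?subr0 ?subrr.
Qed.

Lemma hform_steiner_hm (x : 'I_k -> 'cV[R]_N) :
  hform (steiner_hm R k e) x =
  \sum_(v | v != r)
    (\prod_j (zeta R e r *m x j) r 0 - \prod_j (zeta R e r *m x j) v 0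
     - \prod_j ((zeta R e r *m x j) r 0 - (zeta R e r *m x j) v 0)).
Proof.
rewrite /hform /steiner_hm /=.
under eq_bigr => i _.
  rewrite (steiner_card r tree_e); last first.
    by apply/set0Pn; exists (i (Ordinal k_gt0)); apply: imset_f.
  by rewrite natr_card_splitting mulr_suml over.
rewrite exchange_big /=; apply: eq_bigr => v _.
under eq_bigr => i _ do rewrite !mulrBl mul1r.
rewrite !sumrB; congr (_ - _ - _).
- by rewrite (eq_bigr _ (fun j _ => zeta_mulmx_root (x j))) bigA_distr_bigA.
- by rewrite (eq_bigr _ (fun j _ => zeta_mulmx (x j) v)) prod_sum_mask.
by rewrite (eq_bigr _ (fun j _ => zeta_mulmx_root_sub (x j) v)) prod_sum_mask.
Qed.

End SteinerForm.

Theorem mainTheorem7 (R : realFieldType) (n k : nat) (e : rel 'I_n.+1)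
  (hn : (1 <= n)%N) (hk : (2 <= k)%N) (hT : is_tree e)
  (c : 'I_k -> 'cV[R]_n.+1) :
  let Z := zeta R e ord_max in
  let M := steiner_hm R k e in
  hform M c =
  (if ~~ odd k then
     hform (hm_sub (U_hm R k ord_max) (hm_scale 2 (Idiag_hm R k ord_max)))
           (fun j => Z *m c j)
   else hform (U_hm R k ord_max) (fun j => Z *m c j)).
Proof.
move=> Z M; have k_gt0 : (0 < k)%N by apply: leq_trans hk.
by rewrite hform_U_Idiag // (hform_steiner_hm ord_max hT).
Qed.
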